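(* Let $c_1\ge1$. Let $Q^0$ be the initial cube of the construction (so $Q^0\supset\operatorname{supp}\mu$), and suppose there exist cubes $Q_u,Q_d\in\mathcal D$ contained in $Q^0$ such that $c_1^{-1}\ell(Q^0)\le\operatorname{dist}(Q_u,Q_d)\le c_1\ell(Q^0)$ and $\mu(Q_u)\ge c_1^{-1}\mu(Q^0)$, $\mu(Q_d)\ge c_1^{-1}\mu(Q^0)$. Then $$\|\mathcal R\mu\|_{L^2(\mu)}^2\ge C\,\Theta(Q^0)^2\,\mu(Q^0),$$ where $C>0$ depends only on $c_1$, $s$, $d$ and $c_{sep}$.
   Context: $0<s<d$. $E\subset\mathbb R^d$ is a Cantor set built from a compact $Q^0$ by repeatedly choosing, inside each closed ''cube'' $Q$ of generation $k$, a finite nonempty family of closed children (the cubes of generation $k+1$), such that each child $Q'$ of $Q$ satisfies $\frac18\ell(Q)\le\ell(Q')\le\frac13\ell(Q)$, where $\ell(Q)=\operatorname{diam}(Q)$, and distinct children of $Q$ are at distance $\ge c_{sep}\ell(Q)$. $\mathcal D$ is the family of all such cubes. $\mu$ is a finite Borel measure supported on $E$ with $\mu(Q)>0$ for all $Q\in\mathcal D$. $\Theta(Q)=\mu(Q)/\ell(Q)^s$. $\mathcal R\mu(x)=\int\frac{x-y}{|x-y|^{s+1}}\,d\mu(y)$, with $\|\mathcal R\mu\|_{L^2(\mu)}$ understood via truncations $\mathcal R_\varepsilon\mu(x)=\int_{|x-y|>\varepsilon}\frac{x-y}{|x-y|^{s+1}}d\mu(y)$ uniformly in $\varepsilon>0$.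 *)

From HB Require Import structures.
From mathcomp Require Import all_boot all_order all_algebra.
From mathcomp Require Import all_classical all_reals all_analysis.
Set Implicit Arguments. Unset Strict Implicit. Unset Printing Implicit Defensive.
Import Order.TTheory GRing.Theory Num.Theory.
Import numFieldNormedType.Exports.
Local Open Scope classical_set_scope.
Local Open Scope ring_scope.

Section Defs.
Variables (R : realType) (d : nat).

Definition pt := 'rV[R]_d.

Definition enorm (v : pt) : R := Num.sqrt (\sum_(i < d) (v ord0 i) ^+ 2).
Definition edist (x y : pt) : R := enorm (x - y).

Definition diam (A : set pt) : R :=
  sup [set edist x y | x in A & y in A].
Definition setdist (A B : set pt) : R :=
  inf [set edist x y | x in A & y in B].

Definition Rd := g_sigma_algebraType (@open pt).

(** A Cantor-type construction: [N k] cubes in generation [k], the [j]-th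
    cube of generation [k] is [Q k j] (for [j < N k]); the cube [Q k.+1 j]
    is a child of [Q k (par k j)]. *)
Definition cantor_construction (c_sep : R) (N : nat -> nat)
    (Q : nat -> nat -> set pt) (par : nat -> nat -> nat) : Prop :=
  [/\ N 0%N = 1%N /\ compact (Q 0%N 0%N),
      (forall k j, (j < N k.+1)%N ->
          [/\ (par k j < N k)%N, closed (Q k.+1 j) & Q k.+1 j `<=` Q k (par k j)]),
      (forall k i, (i < N k)%N -> exists j, (j < N k.+1)%N /\ par k j = i),
      (forall k j, (j < N k.+1)%N ->
          diam (Q k (par k j)) / 8 <= diam (Q k.+1 j) <= diam (Q k (par k j)) / 3)
    & (forall k j j', (j < N k.+1)%N -> (j' < N k.+1)%N -> j <> j' ->
          par k j = par k j' ->
          c_sep * diam (Q k (par k j)) <= setdist (Q k.+1 j) (Q k.+1 j'))].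

Definition cantor_set (N : nat -> nat) (Q : nat -> nat -> set pt) : set pt :=
  \bigcap_k \bigcup_(j in [set j | (j < N k)%N]) Q k j.

Definition is_cube (N : nat -> nat) (Q : nat -> nat -> set pt) (A : set pt) :=
  exists k j, (j < N k)%N /\ A = Q k j.

Definition Theta (mu : {finite_measure set Rd -> \bar R}) (s : R) (A : set pt) : R :=
  fine (mu A) / (diam A `^ s).

Definition riesz_trunc (mu : {finite_measure set Rd -> \bar R}) (s eps : R)
    (x : pt) (i : 'I_d) : R :=
  Rintegral mu [set y : Rd | eps < edist x y]
    (fun y : Rd => (x ord0 i - y ord0 i) / (edist x y `^ (s + 1))).

Definition riesz_trunc_L2sq (mu : {finite_measure set Rd -> \bar R}) (s eps : R)
    : \bar R :=
  (\int[mu]_(x in [set: Rd]) (\sum_(i < d) (riesz_trunc mu s eps x i) ^+ 2)%:E)%E.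

Definition riesz_L2sq (mu : {finite_measure set Rd -> \bar R}) (s : R) : \bar R :=
  ereal_sup [set riesz_trunc_L2sq mu s eps | eps in [set e : R | 0 < e]].

End Defs.

From Pilot Require Import Defs.
From HB Require Import structures.
From mathcomp Require Import all_boot all_order all_algebra.
From mathcomp Require Import all_classical all_reals all_analysis.
From mathcomp Require Import measurable_realfun ring lra.
Import Order.TTheory GRing.Theory Num.Theory.
Import numFieldNormedType.Exports.
Local Open Scope classical_set_scope.
Local Open Scope ring_scope.
Set Implicit Arguments. Unset Strict Implicit. Unset Printing Implicit Defensive.

(* Let l = diam Q^0, fix x0 in Q^0 and 0 < eps < delta := l / c1, so that
   delta <= dist(Q_u, Q_d).  Let k_i(x, y) be the i-th component of the
   eps-truncated Riesz kernel and w_i(x) the i-th coordinate of x - x0 clipped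
   to [-l, l].  As k_i is antisymmetric, Fubini gives
     2 \int sum_i (R_eps mu)_i w_i dmu
       = \iint sum_i k_i(x, y) (w_i(x) - w_i(y)) dmu(x) dmu(y),
   whose integrand is nonnegative since clipping is monotone, and equals
   |x - y|^(1-s) >= delta / l^s on Q_u x Q_d.  Optimizing
   2 lam \int F.w <= \int |F|^2 + lam^2 \int |w|^2 over lam, where
   \int |w|^2 <= d l^2 mu(Q^0) because mu lives on E, bounds ||R_eps mu||^2
   below by (delta mu(Q_u) mu(Q_d) / l^s)^2 / (4 d l^2 mu(Q^0)). *)

Lemma sqr_div_le_of_quadratic (R : realFieldType) (J J0 S K K' : R) :
  (forall lam, 2 * lam * J <= S + lam ^+ 2 * K) ->
  0 <= J0 <= J -> 0 <= K <= K' -> J0 ^+ 2 / K' <= S.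
Proof.
move=> quad /andP[J0_ge0 J0J] /andP[K_ge0 KK'].
have K'_ge0 : 0 <= K' := le_trans K_ge0 KK'.
have J0sq : J0 ^+ 2 / K' <= J0 * J / K'.
  by rewrite ler_wpM2r ?invr_ge0// expr2 ler_wpM2l.
have lamK : (J0 / K') ^+ 2 * K <= J0 ^+ 2 / K'.
  have [->|K'_neq0] := eqVneq K' 0; first by rewrite invr0 !mulr0 expr0n mul0r.
  have -> : J0 ^+ 2 / K' = (J0 / K') ^+ 2 * K' by field.
  by rewrite ler_wpM2l ?sqr_ge0.
have := quad (J0 / K'); lra.
Qed.

Section bounded_measurable.
Context d0 (T : measurableType d0) (R : realType).

Definition bounded_measurable (f : T -> R) :=
  measurable_fun [set: T] f /\ exists M : R, forall x, `|f x| <= M.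

Lemma bounded_measurable_integrable (mu : {measure set T -> \bar R}) f :
  (mu setT < +oo)%E -> bounded_measurable f -> mu.-integrable setT (EFin \o f).
Proof.
move=> mu_fin [mf [M fM]]; apply: measurable_bounded_integrable => //.
exists M; split; first exact: ger0_real (le_trans (normr_ge0 _) (fM point)).
by move=> M' MM' x _ /=; exact: le_trans (fM x) (ltW MM').
Qed.

Lemma bounded_measurable_cst c : bounded_measurable (fun=> c).
Proof. by split; [exact: measurable_cst | exists `|c|]. Qed.

Lemma bounded_measurableD f g : bounded_measurable f -> bounded_measurable g ->
  bounded_measurable (fun x => f x + g x).
Proof.
move=> [mf [M fM]] [mg [M' gM']]; split; first exact: measurable_funD.
by exists (M + M') => x; rewrite (le_trans (ler_normD _ _)) ?lerD.
Qed.

Lemma bounded_measurableN f : bounded_measurable f ->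
  bounded_measurable (fun x => - f x).
Proof.
move=> [mf [M fM]]; split; first exact: measurable_funN.
by exists M => x; rewrite normrN.
Qed.

Lemma bounded_measurableM f g : bounded_measurable f -> bounded_measurable g ->
  bounded_measurable (fun x => f x * g x).
Proof.
move=> [mf [M fM]] [mg [M' gM']]; split; first exact: measurable_funM.
by exists (M * M') => x; rewrite normrM ler_pM.
Qed.

Lemma bounded_measurable_sum n (f : 'I_n -> T -> R) :
  (forall i, bounded_measurable (f i)) ->
  bounded_measurable (fun x => \sum_(i < n) f i x).
Proof.
elim: n f => [|n IHn] f bf.
  under [X in bounded_measurable X]funext do rewrite big_ord0.
  exact: bounded_measurable_cst.
under [X in bounded_measurable X]funext do rewrite big_ord_recr /=.
by apply: bounded_measurableD; [apply: IHn => i; exact: bf | exact: bf].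
Qed.

Lemma bounded_measurable_indic (A : set T) : measurable A ->
  bounded_measurable (\1_A : T -> R).
Proof.
move=> mA; split; first exact: measurable_indic.
by exists 1 => x; rewrite /indic; case: (_ \in _); rewrite ?normr1 ?normr0.
Qed.

Variable mu : {finite_measure set T -> \bar R}.

Lemma finite_measureT_lty : (mu setT < +oo)%E.
Proof. exact/fin_num_fun_lty/fin_num_measure. Qed.

Lemma finite_measure_integrable f :
  bounded_measurable f -> mu.-integrable setT (EFin \o f).
Proof. exact: bounded_measurable_integrable finite_measureT_lty. Qed.

Lemma Rintegral_sum n (f : 'I_n -> T -> R) :
  (forall i, bounded_measurable (f i)) ->
  \int[mu]_x (\sum_(i < n) f i x) = \sum_(i < n) \int[mu]_x f i x.
Proof.
elim: n f => [|n IHn] f bf.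
  under eq_Rintegral do rewrite big_ord0.
  by rewrite big_ord0 Rintegral_cst// mul0r.
under eq_Rintegral do rewrite big_ord_recr /=.
rewrite big_ord_recr /= RintegralD//; last 2 first.
- by apply/finite_measure_integrable/bounded_measurable_sum => i; exact: bf.
- exact/finite_measure_integrable/bf.
by rewrite IHn// => i; exact: bf.
Qed.

Lemma normr_Rintegral_le f M : bounded_measurable f -> (forall x, `|f x| <= M) ->
  `|\int[mu]_x f x| <= M * fine (mu setT).
Proof.
move=> bf fM.
rewrite (le_trans (le_normr_Rintegral _ _)) ?finite_measure_integrable//.
rewrite -Rintegral_cst//; apply: le_Rintegral => //.
- exact/integrable_norm/finite_measure_integrable.
- exact/finite_measure_integrable/bounded_measurable_cst.
Qed.

Lemma fine_measure_ge_scale (A B : set T) c : measurable A -> measurable B ->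
  (c%:E * mu B <= mu A)%E -> c * fine (mu B) <= fine (mu A).
Proof. by move=> mA mB; rewrite -lee_fin EFinM !fineK ?fin_num_measure. Qed.

Lemma Rintegral_indicT (A : set T) : measurable A ->
  \int[mu]_x (\1_A x : R) = fine (mu A).
Proof. by move=> mA; rewrite /Rintegral integral_indic// setIT. Qed.

End bounded_measurable.

Section real_Fubini.
Context d0 (T : measurableType d0) (R : realType).
Variable mu : {finite_measure set T -> \bar R}.

Lemma bounded_measurable_pair1 (H : T * T -> R) y :
  bounded_measurable H -> bounded_measurable (fun x => H (x, y)).
Proof. by move=> [mH [M HM]]; split; [exact: measurable_fun_pair1 | exists M]. Qed.

Lemma bounded_measurable_pair2 (H : T * T -> R) x :
  bounded_measurable H -> bounded_measurable (fun y => H (x, y)).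
Proof. by move=> [mH [M HM]]; split; [exact: measurable_fun_pair2 | exists M]. Qed.

Lemma product_measureT_lty : ((mu \x mu)%E setT < +oo)%E.
Proof.
rewrite -setXTT product_measure1E// lte_mul_pinfty ?fin_num_measure//.
exact: finite_measureT_lty.
Qed.

Let integrable2 H :
  bounded_measurable H -> (mu \x mu)%E.-integrable setT (EFin \o H) :=
  bounded_measurable_integrable product_measureT_lty.

Lemma integral_pair2 (H : T * T -> R) x : bounded_measurable H ->
  (\int[mu]_y (H (x, y))%:E)%E = (\int[mu]_y H (x, y))%:E.
Proof.
move=> bH; rewrite fineK//; apply: integrable_fin_num => //.
exact/finite_measure_integrable/bounded_measurable_pair2.
Qed.

Lemma bounded_measurable_Rintegral2 (H : T * T -> R) : bounded_measurable H ->
  bounded_measurable (fun x => \int[mu]_y H (x, y)).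
Proof.
move=> bH; split.
  apply/measurable_EFinP.
  rewrite (_ : _ \o _ = fubini_F mu (EFin \o H)).
    exact: measurable_fubini_F (integrable2 bH).
  by apply/funext => x; rewrite /fubini_F /= integral_pair2.
have [_ [M HM]] := bH; exists (M * fine (mu setT)) => x.
exact: normr_Rintegral_le (bounded_measurable_pair2 _ bH) _.
Qed.

Lemma Rintegral_Fubini (H : T * T -> R) : bounded_measurable H ->
  \int[mu]_x \int[mu]_y H (x, y) = \int[mu]_y \int[mu]_x H (x, y).
Proof.
move=> bH; rewrite /Rintegral; congr fine.
transitivity (\int[mu]_x \int[mu]_y (H (x, y))%:E)%E.
  by apply: eq_integral => x _; rewrite integral_pair2.
rewrite (Fubini (integrable2 bH)); apply: eq_integral => y _.
rewrite fineK//; apply: integrable_fin_num => //.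
exact/finite_measure_integrable/bounded_measurable_pair1.
Qed.

Lemma bounded_measurable_fst (f : T -> R) :
  bounded_measurable f -> bounded_measurable (fun z : T * T => f z.1).
Proof.
move=> [mf [M fM]]; split; last by exists M.
exact: measurableT_comp mf measurable_fst.
Qed.

Lemma bounded_measurable_swap (H : T * T -> R) :
  bounded_measurable H -> bounded_measurable (fun z => H (z.2, z.1)).
Proof.
move=> [mH [M HM]]; split; last by exists M.
exact: (measurableT_comp (f := H) (g := unstable.swap) mH
  (@measurable_swap _ _ T T)).
Qed.

End real_Fubini.

Section euclidean_geometry.
Variables (R : realType) (d : nat).
Local Notation T := (Rd R d).
Local Notation edist := (@Defs.edist R d).
Local Notation diam := (@Defs.diam R d).

Lemma Rd_open_measurable (A : set (pt R d)) : open A -> measurable (A : set T).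
Proof. exact: sub_sigma_algebra. Qed.

Lemma Rd_closed_measurable (A : set (pt R d)) : closed A -> measurable (A : set T).
Proof.
move=> cA; rewrite -(setCK A); apply: measurableC.
by apply: Rd_open_measurable; exact: closed_openC.
Qed.

Lemma measurable_coord (i : 'I_d) :
  measurable_fun [set: T] (fun x : T => (x : pt R d) ord0 i).
Proof.
apply: (measurability _ (RGenOpens.measurableE R)).
move=> _ [_ [a [b ->] <-]]; rewrite setTI; apply: Rd_open_measurable.
move: (@coord_continuous R 1 d ord0 i) => /continuousP; apply.
exact: interval_open.
Qed.

Lemma edistE (x y : pt R d) :
  edist x y = Num.sqrt (\sum_(i < d) (x ord0 i - y ord0 i) ^+ 2).
Proof. by rewrite /Defs.edist /enorm; under eq_bigr do rewrite !mxE. Qed.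

Lemma edist_ge0 (x y : pt R d) : 0 <= edist x y.
Proof. by rewrite edistE sqrtr_ge0. Qed.

Lemma edistC (x y : pt R d) : edist x y = edist y x.
Proof.
rewrite !edistE; congr Num.sqrt; apply: eq_bigr => i _.
by rewrite -sqrrN opprB.
Qed.

Lemma edist_sqr (x y : pt R d) :
  edist x y ^+ 2 = \sum_(i < d) (x ord0 i - y ord0 i) ^+ 2.
Proof. by rewrite edistE sqr_sqrtr// sumr_ge0// => i _; rewrite sqr_ge0. Qed.

Lemma coord_le_edist (x y : pt R d) i : `|x ord0 i - y ord0 i| <= edist x y.
Proof.
rewrite edistE -sqrtr_sqr ler_wsqrtr// (bigD1 i)//= lerDl.
by rewrite sumr_ge0// => j _; rewrite sqr_ge0.
Qed.

Lemma measurable_edist :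
  measurable_fun [set: T * T] (fun z : T * T => edist z.1 z.2).
Proof.
under eq_fun do rewrite edistE.
apply: measurableT_comp.
  exact: continuous_measurable_fun (@sqrt_continuous R).
apply: measurable_sum => i; apply/measurable_funX/measurable_funB.
- exact: measurableT_comp (measurable_coord i) measurable_fst.
- exact: measurableT_comp (measurable_coord i) measurable_snd.
Qed.

Lemma diam_ge0 (A : set (pt R d)) : 0 <= diam A.
Proof.
rewrite /Defs.diam.
have [supA|nosupA] := pselect (has_sup [set edist x y | x in A & y in A]).
  have [_ [x Ax [y Ay _]]] := supA.1; apply: le_trans (edist_ge0 x y) _.
  by apply: sup_upper_bound => //; exists x => //; exists y.
by rewrite sup_out.
Qed.

Lemma edist_le_diam (A : set (pt R d)) x y : 0 < diam A -> A x -> A y ->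
  edist x y <= diam A.
Proof.
rewrite /Defs.diam => diam_gt0 Ax Ay.
have [supA|nosupA] := pselect (has_sup [set edist x y | x in A & y in A]).
  by apply: sup_upper_bound => //; exists x => //; exists y.
by move: diam_gt0; rewrite sup_out ?ltxx.
Qed.

Lemma setdist_le_edist (A B : set (pt R d)) x y : A x -> B y ->
  setdist A B <= edist x y.
Proof.
move=> Ax By; apply: ge_inf; last by exists x => //; exists y.
by exists 0 => _ [a _ [b _ <-]]; exact: edist_ge0.
Qed.

End euclidean_geometry.

Section clip.
Variables (R : realDomainType) (L : R).

Definition clip (t : R) : R := Num.max (- L) (Num.min t L).

Lemma clip_bound t : 0 <= L -> `|clip t| <= L.
Proof.
move=> L_ge0; rewrite ler_norml le_max lexx ge_max ge_min lexx orbT /=.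
by rewrite (le_trans _ L_ge0)// oppr_le0.
Qed.

Lemma clip_id t : `|t| <= L -> clip t = t.
Proof.
by rewrite ler_norml => /andP[Lt tL]; rewrite /clip (min_idPl tL) (max_idPr Lt).
Qed.

Lemma clip_mono : {homo clip : a b / a <= b}.
Proof. by move=> a b ab; rewrite /clip le_max2// le_min2. Qed.

Lemma subr_mul_clip_ge0 a b : 0 <= (a - b) * (clip a - clip b).
Proof.
have [ab|/ltW ba] := leP a b; first by rewrite mulr_le0 ?subr_le0 ?clip_mono.
by rewrite mulr_ge0 ?subr_ge0 ?clip_mono.
Qed.

End clip.

Section truncated_riesz_pairing.
Variables (R : realType) (d : nat) (s eps L : R) (x0 : pt R d).
Hypotheses (s_gt0 : 0 < s) (eps_gt0 : 0 < eps) (L_ge0 : 0 <= L).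
Local Notation T := (Rd R d).
Local Notation edist := (@Defs.edist R d).

Definition riesz_kernel (i : 'I_d) (z : T * T) : R :=
  if eps < edist z.1 z.2
  then (z.1 ord0 i - z.2 ord0 i) * edist z.1 z.2 `^ (- (s + 1)) else 0.

Let powRN_succ e : 0 < e -> e `^ (- (s + 1)) = (e `^ s)^-1 / e.
Proof.
move=> e_gt0; rewrite powRN powRD; last by apply/implyP => _; rewrite gt_eqF.
by rewrite powRr1 ?ltW// invfM.
Qed.

Lemma riesz_kernel_bound i z : `|riesz_kernel i z| <= (eps `^ s)^-1.
Proof.
rewrite /riesz_kernel; case: ifPn => [eps_lt|_]; last first.
  by rewrite normr0 invr_ge0 powR_ge0.
have e_gt0 : 0 < edist z.1 z.2 := lt_trans eps_gt0 eps_lt.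
rewrite powRN_succ// !normrM !normfV (ger0_norm (powR_ge0 _ _)) (gtr0_norm e_gt0).
rewrite mulrCA -[X in _ <= X]mulr1 ler_pM ?invr_ge0 ?powR_ge0 ?mulr_ge0//.
- by rewrite invr_ge0 ltW.
- by rewrite lef_pV2 ?posrE ?powR_gt0// ge0_ler_powR ?ltW// nnegrE ltW.
- by rewrite ler_pdivrMr// mul1r coord_le_edist.
Qed.

Lemma bounded_measurable_riesz_kernel i : bounded_measurable (riesz_kernel i).
Proof.
split; last by exists (eps `^ s)^-1; exact: riesz_kernel_bound.
apply: measurable_fun_ifT.
- exact: measurable_fun_ltr (measurable_cst _) (@measurable_edist R d).
- apply: measurable_funM.
    apply: measurable_funB.
    + exact: measurableT_comp (measurable_coord i) measurable_fst.
    + exact: measurableT_comp (measurable_coord i) measurable_snd.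
  exact: measurableT_comp (measurable_powR _) (@measurable_edist R d).
- exact: measurable_cst.
Qed.

Lemma riesz_kernelC i x y : riesz_kernel i (y, x) = - riesz_kernel i (x, y).
Proof.
rewrite /riesz_kernel /= edistC; case: ifPn => _; last by rewrite oppr0.
by rewrite -mulNr opprB.
Qed.

Lemma riesz_truncE (mu : {finite_measure set T -> \bar R}) x i :
  riesz_trunc mu s eps x i = \int[mu]_y riesz_kernel i (x, y).
Proof.
rewrite /riesz_trunc [LHS]Rintegral_mkcond; apply: eq_Rintegral => y _.
rewrite /restrict /riesz_kernel /=; have [eps_lt|eps_ge] := boolP (eps < edist x y).
  by rewrite mem_set// powRN.
by case: ifPn => // /set_mem /= eps_lt; rewrite eps_lt in eps_ge.
Qed.

Definition clip_coord (i : 'I_d) (x : T) : R := clip L (x ord0 i - x0 ord0 i).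

Lemma bounded_measurable_clip_coord i : bounded_measurable (clip_coord i).
Proof.
split; last by exists L => x; exact: clip_bound.
apply: (measurable_maxr (f := fun=> - L)); first exact: measurable_cst.
apply: (measurable_minr (g := fun=> L)); last exact: measurable_cst.
by apply: measurable_funB; [exact: measurable_coord | exact: measurable_cst].
Qed.

Definition riesz_pair (x y : T) : R :=
  \sum_(i < d) riesz_kernel i (x, y) * (clip_coord i x - clip_coord i y).

Lemma bounded_measurable_riesz_pair :
  bounded_measurable (fun z : T * T => riesz_pair z.1 z.2).
Proof.
apply: bounded_measurable_sum => i.
have bw := bounded_measurable_fst (bounded_measurable_clip_coord i).
apply/bounded_measurableM/bounded_measurableD/bounded_measurableN => //.
  exact: bounded_measurable_riesz_kernel.
exact: bounded_measurable_swap bw.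
Qed.

Lemma riesz_pair_ge0 x y : 0 <= riesz_pair x y.
Proof.
apply: sumr_ge0 => i _; rewrite /riesz_kernel /=.
case: ifPn => _; last by rewrite mul0r.
rewrite mulrAC mulr_ge0 ?powR_ge0// /clip_coord.
have -> : x ord0 i - y ord0 i = (x ord0 i - x0 ord0 i) - (y ord0 i - x0 ord0 i).
  by rewrite opprB addrA subrK.
exact: subr_mul_clip_ge0.
Qed.

Lemma riesz_pairE (x y : T) : (forall i, `|x ord0 i - x0 ord0 i| <= L) ->
  (forall i, `|y ord0 i - x0 ord0 i| <= L) -> eps < edist x y ->
  riesz_pair x y = edist x y / edist x y `^ s.
Proof.
move=> near_x near_y eps_lt; have e_gt0 : 0 < edist x y := lt_trans eps_gt0 eps_lt.
rewrite /riesz_pair; under eq_bigr => i _.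
  rewrite /riesz_kernel /= eps_lt /clip_coord !clip_id ?near_x ?near_y//.
  rewrite opprB addrA subrK mulrAC -expr2.
  over.
rewrite -mulr_suml -edist_sqr powRN_succ// expr2; field.
by rewrite !gt_eqF ?powR_gt0.
Qed.

Variable mu : {finite_measure set T -> \bar R}.

Lemma bounded_measurable_riesz_trunc i :
  bounded_measurable (fun x : T => riesz_trunc mu s eps x i).
Proof.
under [X in bounded_measurable X]funext do rewrite riesz_truncE.
exact: bounded_measurable_Rintegral2 (bounded_measurable_riesz_kernel i).
Qed.

Definition riesz_dot (x : T) : R :=
  \sum_(i < d) riesz_trunc mu s eps x i * clip_coord i x.

Lemma Rintegral_riesz_dot :
  2 * \int[mu]_x riesz_dot x = \int[mu]_x \int[mu]_y riesz_pair x y.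
Proof.
pose H (z : T * T) := \sum_(i < d) riesz_kernel i z * clip_coord i z.1.
have bH : bounded_measurable H.
  apply: bounded_measurable_sum => i; apply: bounded_measurableM.
    exact: bounded_measurable_riesz_kernel.
  exact/bounded_measurable_fst/bounded_measurable_clip_coord.
have dotE x : riesz_dot x = \int[mu]_y H (x, y).
  rewrite /H Rintegral_sum /=; last first.
    move=> i; apply: bounded_measurableM; last exact: bounded_measurable_cst.
    exact/bounded_measurable_pair2/bounded_measurable_riesz_kernel.
  apply: eq_bigr => i _; rewrite riesz_truncE RintegralZr//.
  exact/finite_measure_integrable/bounded_measurable_pair2
    /bounded_measurable_riesz_kernel.
under eq_Rintegral do rewrite dotE.
rewrite mulr2n mulrDl mul1r {1}(Rintegral_Fubini mu bH) -RintegralD//; last 2 first.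
- exact: finite_measure_integrable
    (bounded_measurable_Rintegral2 mu (bounded_measurable_swap bH)).
- exact: finite_measure_integrable (bounded_measurable_Rintegral2 mu bH).
apply: eq_Rintegral => x _; rewrite -RintegralD//; last 2 first.
- exact: finite_measure_integrable
    (bounded_measurable_pair2 x (bounded_measurable_swap bH)).
- exact: finite_measure_integrable (bounded_measurable_pair2 x bH).
apply: eq_Rintegral => y _; rewrite /H /riesz_pair /= -big_split /=.
by apply: eq_bigr => i _; rewrite riesz_kernelC; ring.
Qed.

Lemma Rintegral_riesz_pair_ge (Qu Qd : set T) c :
  measurable Qu -> measurable Qd -> 0 <= c ->
  (forall x y, Qu x -> Qd y -> c <= riesz_pair x y) ->
  c * fine (mu Qu) * fine (mu Qd) <= \int[mu]_x \int[mu]_y riesz_pair x y.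
Proof.
move=> mQu mQd c_ge0 c_le.
have bQu := bounded_measurable_indic R mQu.
have bQd := bounded_measurable_indic R mQd.
have cQu : bounded_measurable (fun x => c * \1_Qu x).
  by apply: bounded_measurableM; [exact: bounded_measurable_cst | exact: bQu].
have -> : c * fine (mu Qu) * fine (mu Qd) =
    \int[mu]_x (c * \1_Qu x * fine (mu Qd)).
  by rewrite RintegralZr ?finite_measure_integrable// RintegralZl
    ?finite_measure_integrable// Rintegral_indicT.
apply: le_Rintegral => //.
- exact/finite_measure_integrable/(bounded_measurableM cQu)/bounded_measurable_cst.
- exact: finite_measure_integrable
    (bounded_measurable_Rintegral2 mu bounded_measurable_riesz_pair).
move=> x _.
have -> : c * \1_Qu x * fine (mu Qd) = \int[mu]_y (c * \1_Qu x * \1_Qd y).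
  by rewrite RintegralZl ?finite_measure_integrable// Rintegral_indicT.
apply: le_Rintegral => //.
- exact/finite_measure_integrable/bounded_measurableM/bQd/bounded_measurable_cst.
- exact: finite_measure_integrable
    (bounded_measurable_pair2 x bounded_measurable_riesz_pair).
move=> y _; rewrite /indic.
have [/set_mem Qux|_] := boolP (x \in Qu); last by rewrite mulr0 mul0r riesz_pair_ge0.
have [/set_mem Qdy|_] := boolP (y \in Qd); last by rewrite mulr0 riesz_pair_ge0.
by rewrite !mulr1 c_le.
Qed.

Lemma riesz_trunc_L2sqE : riesz_trunc_L2sq mu s eps =
  (\int[mu]_x \sum_(i < d) riesz_trunc mu s eps x i ^+ 2)%:E.
Proof.
rewrite /Rintegral fineK//; apply: integrable_fin_num => //.
apply/finite_measure_integrable/bounded_measurable_sum => i.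
exact/bounded_measurableM/bounded_measurable_riesz_trunc/bounded_measurable_riesz_trunc.
Qed.

Lemma riesz_dot_quadratic lam :
  2 * lam * \int[mu]_x riesz_dot x <=
  \int[mu]_x (\sum_(i < d) riesz_trunc mu s eps x i ^+ 2)
    + lam ^+ 2 * (L ^+ 2 * d%:R * fine (mu setT)).
Proof.
have bR := bounded_measurable_riesz_trunc.
have bdot : bounded_measurable riesz_dot.
  apply: bounded_measurable_sum => i.
  exact/bounded_measurableM/bounded_measurable_clip_coord.
have bsqr :
    bounded_measurable (fun x : T => \sum_(i < d) riesz_trunc mu s eps x i ^+ 2).
  by apply: bounded_measurable_sum => i; apply: bounded_measurableM.
rewrite [_ * (_ * _)]mulrA [_ * (_ * _)]mulrA.
rewrite -RintegralZl ?finite_measure_integrable// -Rintegral_cst//.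
rewrite -RintegralD//; last 2 first.
- exact: finite_measure_integrable bsqr.
- exact/finite_measure_integrable/bounded_measurable_cst.
apply: le_Rintegral => //.
- exact/finite_measure_integrable/bounded_measurableM/bdot/bounded_measurable_cst.
- exact/finite_measure_integrable/bounded_measurableD/bounded_measurable_cst/bsqr.
move=> x _; rewrite /riesz_dot mulr_sumr.
have -> : lam ^+ 2 * L ^+ 2 * d%:R = \sum_(i < d) lam ^+ 2 * L ^+ 2.
  by rewrite sumr_const card_ord mulr_natr.
rewrite -big_split /=; apply: ler_sum => i _.
set a := riesz_trunc mu s eps x i; set b := clip_coord i x.
have b_sqr_le : b ^+ 2 <= L ^+ 2.
  by rewrite -real_normK ?num_real// lerXn2r ?nnegrE// clip_bound.
have := sqr_ge0 (a - lam * b); have := ler_wpM2l (sqr_ge0 lam) b_sqr_le.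
nra.
Qed.

Lemma riesz_trunc_L2sq_ge_separated (A Qu Qd : set T) (delta a b M : R) :
  A x0 -> (forall x y, A x -> A y -> edist x y <= L) ->
  measurable Qu -> measurable Qd -> Qu `<=` A -> Qd `<=` A ->
  eps < delta -> (forall x y, Qu x -> Qd y -> delta <= edist x y) ->
  0 <= a <= fine (mu Qu) -> 0 <= b <= fine (mu Qd) -> fine (mu setT) <= M ->
  (((delta / L `^ s * a * b / 2) ^+ 2 / (L ^+ 2 * d%:R * M))%:E
    <= riesz_trunc_L2sq mu s eps)%E.
Proof.
move=> Ax0 diamA mQu mQd sQu sQd eps_delta delta_le /andP[a_ge0 a_le]
  /andP[b_ge0 b_le] muT_le.
have delta_gt0 : 0 < delta := lt_trans eps_gt0 eps_delta.
have c_ge0 : 0 <= delta / L `^ s by rewrite divr_ge0 ?powR_ge0 ?ltW.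
have near_x0 x : A x -> forall i, `|x ord0 i - x0 ord0 i| <= L.
  by move=> Ax i; exact: le_trans (coord_le_edist x x0 i) (diamA _ _ Ax Ax0).
have pair_ge x y : Qu x -> Qd y -> delta / L `^ s <= riesz_pair x y.
  move=> Qux Qdy; have delta_e := delta_le _ _ Qux Qdy.
  have e_gt0 : 0 < edist x y := lt_le_trans delta_gt0 delta_e.
  have e_le : edist x y <= L by apply: diamA; [exact: sQu | exact: sQd].
  rewrite riesz_pairE; last exact: lt_le_trans delta_e.
  - rewrite ler_pM ?invr_ge0 ?powR_ge0 ?(ltW delta_gt0)//.
    have L_gt0 : 0 < L := lt_le_trans e_gt0 e_le.
    rewrite lef_pV2 ?posrE ?powR_gt0//.
    by rewrite ge0_ler_powR// ?nnegrE ltW.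
  - exact/near_x0/sQu.
  - exact/near_x0/sQd.
rewrite riesz_trunc_L2sqE lee_fin.
apply: (sqr_div_le_of_quadratic riesz_dot_quadratic); apply/andP; split.
- exact: divr_ge0 (mulr_ge0 (mulr_ge0 c_ge0 a_ge0) b_ge0) (ler0n _ 2).
- rewrite ler_pdivrMr// [X in _ <= X]mulrC Rintegral_riesz_dot.
  apply: le_trans (Rintegral_riesz_pair_ge mQu mQd c_ge0 pair_ge).
  by rewrite -mulrA -[X in _ <= X]mulrA ler_wpM2l// ler_pM.
- exact: mulr_ge0 (mulr_ge0 (sqr_ge0 L) (ler0n _ d)) (fine_ge0 (measure_ge0 _ _)).
- by rewrite ler_wpM2l ?mulr_ge0 ?sqr_ge0.
Qed.

End truncated_riesz_pairing.

Section cantor_cubes.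
Variables (R : realType) (d : nat) (c_sep : R) (N : nat -> nat)
  (Q : nat -> nat -> set (pt R d)) (par : nat -> nat -> nat).
Hypothesis cantorQ : cantor_construction c_sep N Q par.

Lemma cantor_root_index j : (j < N 0)%N -> j = 0%N.
Proof. by case: cantorQ => -[-> _] _ _ _ _; case: j. Qed.

Lemma cantor_root_gt0 : (0 < N 0)%N.
Proof. by case: cantorQ => -[-> _]. Qed.

Lemma cantor_cube_measurable k j : (j < N k)%N -> measurable (Q k j : set (Rd R d)).
Proof.
move=> jN; apply: Rd_closed_measurable; case: cantorQ => -[_ cQ] children _ _ _.
case: k jN => [|k] jN; last by have [] := children k j jN.
by rewrite (cantor_root_index jN); exact: compact_closed (@norm_hausdorff _ _) cQ.
Qed.

Lemma is_cube_measurable (A : set (pt R d)) :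
  is_cube N Q A -> measurable (A : set (Rd R d)).
Proof. by move=> [k [j [jN ->]]]; exact: cantor_cube_measurable. Qed.

Lemma cantor_set_sub_root : cantor_set N Q `<=` Q 0 0.
Proof. by move=> x /(_ 0%N I) [j /= /cantor_root_index <-]. Qed.

Lemma cantor_root_fine_gt0 (mu : {finite_measure set Rd R d -> \bar R}) :
  (forall k j, (j < N k)%N -> (0 < mu (Q k j))%E) -> 0 < fine (mu (Q 0 0)).
Proof.
move=> cube_gt0; have mQ0 := cantor_cube_measurable cantor_root_gt0.
by rewrite -lte_fin fineK ?fin_num_measure ?cube_gt0 ?cantor_root_gt0.
Qed.

Lemma cantor_measureT (mu : {finite_measure set Rd R d -> \bar R}) :
  mu (~` cantor_set N Q) = 0%E -> mu setT = mu (Q 0 0).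
Proof.
move=> muE; have mQ0 := cantor_cube_measurable cantor_root_gt0.
have mE : measurable (cantor_set N Q : set (Rd R d)).
  apply: bigcapT_measurable => k; rewrite bigcup_mkcond.
  apply: bigcupT_measurable => j; case: ifPn => [/set_mem|_]; last exact: measurable0.
  exact: cantor_cube_measurable.
have muQ0c : mu (~` Q 0 0) = 0%E.
  apply/eqP; rewrite eq_le measure_ge0 andbT -muE le_measure ?inE//.
  - exact: measurableC.
  - exact: measurableC.
  - by apply: subsetC; exact: cantor_set_sub_root.
rewrite -(setUv (Q 0 0)) measureU ?setICr//; last exact: measurableC.
by rewrite -[RHS]adde0; congr (_ + _)%E.
Qed.

End cantor_cubes.

Section riesz_L2sq.
Variables (R : realType) (d : nat) (mu : {finite_measure set Rd R d -> \bar R}).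
Variable s : R.

Lemma riesz_trunc_L2sq_le eps : 0 < eps ->
  (riesz_trunc_L2sq mu s eps <= riesz_L2sq mu s)%E.
Proof. by move=> eps_gt0; apply: ereal_sup_ubound; exists eps. Qed.

Lemma riesz_L2sq_ge0 : (0 <= riesz_L2sq mu s)%E.
Proof.
apply: le_trans (riesz_trunc_L2sq_le ltr01).
by apply: integral_ge0 => x _; rewrite lee_fin sumr_ge0// => i _; rewrite sqr_ge0.
Qed.

Lemma riesz_L2sq_ge_separated (x0 : pt R d) (A Qu Qd : set (Rd R d))
    (L delta a b M : R) :
  0 < s -> 0 < delta ->
  A x0 -> (forall x y, A x -> A y -> Defs.edist x y <= L) ->
  measurable Qu -> measurable Qd -> Qu `<=` A -> Qd `<=` A ->
  (forall x y, Qu x -> Qd y -> delta <= Defs.edist x y) ->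
  0 <= a <= fine (mu Qu) -> 0 <= b <= fine (mu Qd) -> fine (mu setT) <= M ->
  (((delta / L `^ s * a * b / 2) ^+ 2 / (L ^+ 2 * d%:R * M))%:E
    <= riesz_L2sq mu s)%E.
Proof.
move=> s_gt0 delta_gt0 Ax0 diamA mQu mQd sQu sQd delta_le a_bd b_bd muT_le.
have eps_gt0 : 0 < delta / 2 by rewrite divr_gt0.
have L_ge0 : 0 <= L := le_trans (edist_ge0 x0 x0) (diamA _ _ Ax0 Ax0).
apply: le_trans (riesz_trunc_L2sq_le eps_gt0).
apply: (riesz_trunc_L2sq_ge_separated s_gt0 eps_gt0 L_ge0 Ax0 diamA mQu mQd sQu sQd)
  => //.
by rewrite ltr_pdivrMr// ltr_pMr// ltr1n.
Qed.

End riesz_L2sq.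

Lemma Theta_diam0 (R : realType) d (mu : {finite_measure set Rd R d -> \bar R}) s A :
  0 < s -> Defs.diam A = 0 -> Theta mu s A = 0.
Proof. by move=> s_gt0 diam0; rewrite /Theta diam0 powR0 ?gt_eqF// invr0 mulr0. Qed.

Theorem lemma8p3 (R : realType) (d : nat) (s c_sep c1 : R) :
  0 < s -> s < d%:R -> 0 < c_sep -> 1 <= c1 ->
  exists2 C : R, 0 < C &
  forall (N : nat -> nat) (Q : nat -> nat -> set (pt R d))
         (par : nat -> nat -> nat)
         (mu : {finite_measure set (Rd R d) -> \bar R}),
    cantor_construction c_sep N Q par ->
    mu (~` cantor_set N Q) = 0%E ->
    (forall k j, (j < N k)%N -> (0 < mu (Q k j))%E) ->
    forall Qu Qd : set (pt R d),
      is_cube N Q Qu -> is_cube N Q Qd ->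
      Qu `<=` Q 0%N 0%N -> Qd `<=` Q 0%N 0%N ->
      c1^-1 * diam (Q 0%N 0%N) <= setdist Qu Qd <= c1 * diam (Q 0%N 0%N) ->
      (mu Qu >= (c1^-1)%:E * mu (Q 0%N 0%N))%E ->
      (mu Qd >= (c1^-1)%:E * mu (Q 0%N 0%N))%E ->
      ((C * Theta mu s (Q 0%N 0%N) ^+ 2 * fine (mu (Q 0%N 0%N)))%:E
         <= riesz_L2sq mu s)%E.
Proof.
move=> s_gt0 s_lt_d _ c1_ge1.
have c1_gt0 : 0 < c1 := lt_le_trans ltr01 c1_ge1.
have d_gt0 : 0 < d%:R :> R := lt_trans s_gt0 s_lt_d.
exists (4 * d%:R * c1 ^+ 6)^-1; first by rewrite invr_gt0 !mulr_gt0// exprn_gt0.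
move=> N Q par mu cantorQ muE cube_gt0 Qu Qd cube_u cube_d sQu sQd.
move=> /andP[dist_ge _] mu_u mu_d.
set L := Defs.diam (Q 0%N 0%N); set m := fine (mu (Q 0%N 0%N)).
have m_gt0 : 0 < m := cantor_root_fine_gt0 cantorQ cube_gt0.
have [x0 Q0x0] : exists x0, Q 0%N 0%N x0.
  by apply/set0P/eqP => Q0_eq0; move: m_gt0; rewrite /m Q0_eq0 measure0 ltxx.
have [L0|L_neq0] := eqVneq L 0.
  by rewrite Theta_diam0// expr0n mulr0 mul0r riesz_L2sq_ge0.
have L_gt0 : 0 < L by rewrite lt0r L_neq0 diam_ge0.
have mQ0 := cantor_cube_measurable cantorQ (cantor_root_gt0 cantorQ).
have mQu := is_cube_measurable cantorQ cube_u.
have mQd := is_cube_measurable cantorQ cube_d.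
have a_ge0 : 0 <= c1^-1 * m by rewrite mulr_ge0 ?invr_ge0 ?ltW.
apply: le_trans (riesz_L2sq_ge_separated (A := Q 0%N 0%N) (L := L) (M := m)
  (delta := c1^-1 * L) (a := c1^-1 * m) (b := c1^-1 * m) s_gt0 _ Q0x0 _
  mQu mQd sQu sQd _ _ _ _).
- rewrite lee_fin /Theta -/L -/m le_eqVlt; apply/orP; left; apply/eqP.
  by field; rewrite !gt_eqF ?powR_gt0.
- by rewrite mulr_gt0 ?invr_gt0.
- by move=> x y Q0x Q0y; exact: edist_le_diam.
- by move=> x y Qux Qdy; exact: le_trans dist_ge (setdist_le_edist Qux Qdy).
- by rewrite a_ge0 fine_measure_ge_scale.
- by rewrite a_ge0 fine_measure_ge_scale.
- by rewrite (cantor_measureT cantorQ muE).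
Qed.
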